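(* Let $n\ge 2$ and $\sigma,\tau\in S_n$. Define $\delta(\sigma,\tau)=|\{x\in\{n-1,\sigma^{-1}(n-1),\tau^{-1}(n-1)\}:\sigma(x)\neq\tau(x)\}|$ and $\delta^{\sf CT}(\sigma,\tau)=|\{x\in\{\sigma^{-1}(n-1),\tau^{-1}(n-1)\}:\sigma^{\sf CT}(x)\neq\tau^{\sf CT}(x)\}|$. Then ${\rm hd}(\sigma,\tau)-{\rm hd}(\sigma^{\sf CT},\tau^{\sf CT})=\delta(\sigma,\tau)-\delta^{\sf CT}(\sigma,\tau)$.
   Context: $S_n$ is the symmetric group on $\{0,1,\ldots,n-1\}$; ${\rm hd}(\sigma,\tau)=|\{x:\sigma(x)\neq\tau(x)\}|$. The contraction of $\sigma\in S_n$ is $\sigma^{\sf CT}\in S_{n-1}$ (on $\{0,\ldots,n-2\}$) defined by $\sigma^{\sf CT}(x)=\sigma(n-1)$ if $x=\sigma^{-1}(n-1)$ and $\sigma^{\sf CT}(x)=\sigma(x)$ otherwise (i.e. delete $n-1$ from the cycle notation of $\sigma$). In the definition of $\delta^{\sf CT}$ only those elements of $\{\sigma^{-1}(n-1),\tau^{-1}(n-1)\}$ lying in $\{0,\ldots,n-2\}$ are considered (the symbol $n-1$ is not in the domain of the contractions). *)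

From mathcomp Require Import all_boot all_fingroup.
Set Implicit Arguments.
Local Open Scope group_scope. Unset Strict Implicit. Unset Printing Implicit Defensive.

(* S_{n+1} is modelled as {perm 'I_n.+1}; the symbol "n" of the paper
   (the largest point) is ord_max : 'I_n.+1. *)

Definition hd (T : finType) (s t : {perm T}) : nat := #|[set x | s x != t x]|.

Definition ct_nat n (s : {perm 'I_n.+1}) (x : 'I_n) : nat :=
  let y := s (widen_ord (leqnSn n) x) in
  if y == ord_max then nat_of_ord (s ord_max) else nat_of_ord y.

Lemma ct_nat_lt n (s : {perm 'I_n.+1}) (x : 'I_n) : ct_nat s x < n.
Proof.
rewrite /ct_nat; set w := widen_ord _ x.
have wn : w != ord_max by rewrite neq_ltn /= ltn_ord.
have ltmax : forall y : 'I_n.+1, y != ord_max -> y < n.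
  by move=> y; rewrite neq_ltn => /orP[/= h|h] //; move: (ltn_ord y); rewrite ltnS leqNgt h.
case: eqP => [E|/eqP E]; apply: ltmax => //.
apply/negP => /eqP E'; move: wn; rewrite -E' in E.
by rewrite (perm_inj E) eqxx.
Qed.

Definition ct_fun n (s : {perm 'I_n.+1}) (x : 'I_n) : 'I_n := Ordinal (ct_nat_lt s x).

Lemma ct_fun_inj n (s : {perm 'I_n.+1}) : injective (ct_fun s).
Proof.
move=> x y; rewrite /ct_fun => /(congr1 val) /=.
rewrite /ct_nat.
have wi : forall a b : 'I_n, widen_ord (leqnSn n) a = widen_ord (leqnSn n) b -> a = b.
  by move=> a b /(congr1 val) /= /val_inj.
have wn : forall a : 'I_n, widen_ord (leqnSn n) a != ord_max.
  by move=> a; rewrite neq_ltn /= ltn_ord.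
do 2 case: eqP.
- by move=> Ey Ex _; apply: wi; apply: (@perm_inj _ s); rewrite Ex Ey.
- move=> _ Ex /val_inj E; have : s ord_max = s (widen_ord (leqnSn n) y) by [].
  by move/perm_inj => E'; move: (wn y); rewrite -E' eqxx.
- move=> Ey _ /val_inj E; have : s (widen_ord (leqnSn n) x) = s ord_max by [].
  by move/perm_inj => E'; move: (wn x); rewrite E' eqxx.
- by move=> _ _ /val_inj /perm_inj; apply: wi.
Qed.

(* sigma^CT in S_n : delete the largest point from the cycle notation *)
Definition contract n (s : {perm 'I_n.+1}) : {perm 'I_n} := perm (@ct_fun_inj n s).

Definition delta n (s t : {perm 'I_n.+1}) : nat :=
  #|[set x in [set ord_max; s^-1 ord_max; t^-1 ord_max] | s x != t x]|.

Definition deltaCT n (s t : {perm 'I_n.+1}) : nat :=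
  #|[set x : 'I_n | ((widen_ord (leqnSn n) x == s^-1 ord_max) ||
                      (widen_ord (leqnSn n) x == t^-1 ord_max))
                    && (contract s x != contract t x)]|.

From mathcomp Require Import all_boot all_fingroup.

(* Split each Hamming distance into the disagreements inside and outside a set
   of special points: [{n-1, s^-1(n-1), t^-1(n-1)}] for [s, t], and its trace
   [{s^-1(n-1), t^-1(n-1)}] on [{0, ..., n-2}] for the contractions.  Off these
   points the contractions coincide with [s] and [t], and the two complements
   correspond under the inclusion [{0, ..., n-2} -> {0, ..., n-1}], so the
   outside counts agree and only the inside counts, [delta] and [deltaCT],
   remain. *)

Set Implicit Arguments.
Unset Strict Implicit.
Unset Printing Implicit Defensive.

Local Open Scope group_scope.

Lemma hd_split (T : finType) (s t : {perm T}) (A : {set T}) :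
  hd s t = #|[set x in A | s x != t x]| + #|[set x | s x != t x] :\: A|.
Proof. by rewrite /hd -(cardsID A) setIdE setIC. Qed.

Lemma eq_perm_invV (T : finType) (s : {perm T}) (x y : T) :
  (x == s^-1 y) = (s x == y).
Proof. by rewrite -(inj_eq (@perm_inj _ s)) permKV. Qed.

Section Contraction.

Variable n : nat.

Local Notation widen := (widen_ord (leqnSn n)).

Lemma widen_lift_max (x : 'I_n) : widen x = lift ord_max x.
Proof. exact/val_inj/esym/lift_max. Qed.

Lemma widen_inj : injective widen.
Proof. by move=> x y; rewrite !widen_lift_max => /lift_inj. Qed.

Lemma widen_neq_max (x : 'I_n) : widen x != ord_max.
Proof. by rewrite neq_ltn /= ltn_ord. Qed.

Lemma widen_contract (s : {perm 'I_n.+1}) (x : 'I_n) :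
  s (widen x) != ord_max -> widen (contract s x) = s (widen x).
Proof. by move=> /negbTE sx_max; apply: val_inj; rewrite /= permE /= /ct_nat sx_max. Qed.

Variables s t : {perm 'I_n.+1}.

Local Notation special := [set ord_max; s^-1 ord_max; t^-1 ord_max].
Local Notation special_CT :=
  [set x : 'I_n | (widen x == s^-1 ord_max) || (widen x == t^-1 ord_max)].

Lemma diff_off_max :
  [set x | s x != t x] :\: special =
  widen @: ([set x | contract s x != contract t x] :\: special_CT).
Proof.
apply/setP => y; case: (unliftP ord_max y) => [x ->|->].
- rewrite -widen_lift_max (mem_imset _ _ widen_inj) !inE.
  rewrite (negbTE (widen_neq_max x)) !eq_perm_invV /=.
  case: (eqVneq (s (widen x)) ord_max) => //= sx_max.
  case: (eqVneq (t (widen x)) ord_max) => //= tx_max.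
  by rewrite -(inj_eq widen_inj) !widen_contract.
- rewrite !inE eqxx /=; apply/esym/negbTE/imsetP => -[x _ /eqP].
  by rewrite eq_sym (negbTE (widen_neq_max x)).
Qed.

Lemma hd_delta_split :
  hd s t = delta s t + #|[set x | s x != t x] :\: special|.
Proof. exact: hd_split. Qed.

Lemma hd_contract_deltaCT_split :
  hd (contract s) (contract t) =
  deltaCT s t + #|[set x | contract s x != contract t x] :\: special_CT|.
Proof.
rewrite (hd_split _ _ special_CT); congr (_ + _).
by apply: eq_card => x; rewrite !inE.
Qed.

Lemma card_diff_off_max :
  #|[set x | s x != t x] :\: special| =
  #|[set x | contract s x != contract t x] :\: special_CT|.
Proof. by rewrite diff_off_max card_imset //; apply: widen_inj. Qed.

End Contraction.

Theorem lemma4p1 (n : nat) (hn : 1 <= n) (s t : {perm 'I_n.+1}) :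
  hd s t + deltaCT s t = hd (contract s) (contract t) + delta s t.
Proof.
rewrite hd_delta_split hd_contract_deltaCT_split card_diff_off_max.
by rewrite addnC addnA addnAC.
Qed.
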